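(* Let $\Gamma$ be a metric graph and let $F$ be a subbundle of a vector bundle $E$ on $\Gamma$. Then there exists another subbundle $H$ of $E$ such that $E\simeq F\oplus H$.
   Context: A vector bundle of rank $n$ on a metric graph $\Gamma$ is a torsor under the sheaf of groups $S_n\ltimes\mathcal{H}_\Gamma^n$, where $\mathcal{H}_\Gamma$ is the sheaf of harmonic functions (piecewise linear with integer slopes and zero Laplacian) and $S_n$ permutes factors. With respect to an oriented simple model of $\Gamma$ and its star cover, it is described by transition matrices $g^e$ on the edges $e$ with entries in $\mathbb{T}=\mathbb{R}\cup\{\infty\}$ having exactly one finite entry in each row and column, the finite entries being affine functions with integer slope on $e$; two bundles are isomorphic iff their transition data are cohomologous. The direct sum $E\oplus F$ has block-diagonal transition matrices $\begin{bmatrix} g^e&\infty\\ \infty& h^e\end{bmatrix}$. A rank-$m$ bundle $F$ ($m\le n$) is a subbundle of the rank-$n$ bundle $E$ if transition matrices $h^e$ of $F$ and $g^e$ of $E$ can be chosen with $g^e=\begin{bmatrix} h^e&\ast\\ \infty&\ast\end{bmatrix}$ for all edges $e$. *)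

From Stdlib Require Import Reals.
From mathcomp Require Import all_boot fingroup perm.

Set Implicit Arguments.
Unset Strict Implicit.
Unset Printing Implicit Defensive.

Local Open Scope R_scope.

(* Oriented model of a (compact) metric graph: finite vertex and edge
   sets, every edge oriented from its tail to its head, with a length.  *)
Record model := Model {
  vert : finType;
  edge : finType;
  tl : edge -> vert;
  hd : edge -> vert;
  len : edge -> R }.

Definition simple_model (G : model) : Prop :=
  (forall e : edge G, tl e <> hd e) /\
  (forall e e' : edge G,
      (tl e = tl e' /\ hd e = hd e') \/ (tl e = hd e' /\ hd e = tl e') ->
      e = e') /\
  (forall e : edge G, (0 < len e)).

(* Points of the (open) edge e are parametrized by t in (0, len e),
   t = distance from the tail of e. *)
Definition interior (G : model) (e : edge G) (t : R) : Prop :=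
  (0 < t /\ t < len e).

(* Tropical numbers T = R u {oo}: None stands for oo.                  *)
Definition trop := option R.

Definition tadd (x y : trop) : trop :=
  match x, y with Some a, Some b => Some (a + b) | _, _ => None end.

Definition tmin (x y : trop) : trop :=
  match x, y with
  | None, _ => y
  | _, None => x
  | Some a, Some b => Some (Rmin a b)
  end.

(* An n x n matrix whose entries are T-valued functions on an edge
   (the argument t is the coordinate on the edge). *)
Definition tmat (n : nat) := 'I_n -> 'I_n -> R -> trop.

Definition tmul n (A B : tmat n) : tmat n :=
  fun i j t => \big[tmin/None]_(k < n) tadd (A i k t) (B k j t).

Definition entry_fin (G : model) (e : edge G) (x : R -> trop) : Prop :=
  exists (a : R) (s : Z), forall t, interior e t -> x t = Some (a + IZR s * t).

Definition entry_inf (G : model) (e : edge G) (x : R -> trop) : Prop :=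
  forall t, interior e t -> x t = None.

Definition trans_mx (G : model) n (e : edge G) (A : tmat n) : Prop :=
  (forall i j, entry_fin e (A i j) \/ entry_inf e (A i j)) /\
  (forall i, exists! j, entry_fin e (A i j)) /\
  (forall j, exists! i, entry_fin e (A i j)).

(* Transition data of a rank n vector bundle w.r.t. the star cover of
   the model: one matrix per edge (triple overlaps of stars are empty
   in a simple model, so there is no cocycle condition). *)
Definition tdata (G : model) n := edge G -> tmat n.

Definition bundle (G : model) n (g : tdata G n) : Prop :=
  forall e, trans_mx e (g e).

(* Sections of S_n |x H^n over the open star U_v of a vertex v.
   U_v is connected, so the S_n-part is one permutation pi; a harmonic
   function on U_v is given by its value c at v and its outgoing integer
   slopes s e along the incident edges e, with zero Laplacian at v
   (sum of outgoing slopes = 0).                                        *)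
Definition incident (G : model) (v : vert G) (e : edge G) : bool :=
  (tl e == v) || (hd e == v).

Definition harmonic_at (G : model) (v : vert G) (s : edge G -> Z) : Prop :=
  \big[Z.add/0%Z]_(e | incident v e) s e = 0%Z.

(* Value at the point t of the edge e (incident to v) of the harmonic
   function on U_v with value c at v and outgoing slope sl along e. *)
Definition hval (G : model) (v : vert G) (e : edge G) (c : R) (sl : Z) (t : R) : R :=
  if tl e == v then (c + IZR sl * t) else (c + IZR sl * (len e - t)).

(* Matrix of the restriction to the edge e of the star section
   (pi, (c_i, s_i)_i) at v, and of its inverse.                        *)
Definition star_mx (G : model) n (v : vert G) (pi : {perm 'I_n})
    (c : 'I_n -> R) (s : 'I_n -> edge G -> Z) (e : edge G) : tmat n :=
  fun i j t => if pi i == j then Some (hval v e (c i) (s i e) t) else None.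

Definition star_inv_mx (G : model) n (v : vert G) (pi : {perm 'I_n})
    (c : 'I_n -> R) (s : 'I_n -> edge G -> Z) (e : edge G) : tmat n :=
  fun j i t => if pi i == j then Some (- hval v e (c i) (s i e) t) else None.

(* Two transition data are cohomologous (= the bundles are isomorphic):
   g' e = h_{hd e} (.) g e (.) h_{tl e}^{-1} on every edge e, for some
   sections h_v of S_n |x H^n over the stars U_v.                       *)
Definition cohom (G : model) n (g g' : tdata G n) : Prop :=
  exists (pi : vert G -> {perm 'I_n}) (c : vert G -> 'I_n -> R)
         (s : vert G -> 'I_n -> edge G -> Z),
    (forall v i, harmonic_at v (s v i)) /\
    (forall e i j t, interior e t ->
       g' e i j t =
       tmul (tmul (star_mx (hd e) (pi (hd e)) (c (hd e)) (s (hd e)) e) (g e))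
            (star_inv_mx (tl e) (pi (tl e)) (c (tl e)) (s (tl e)) e) i j t).

Definition dsum (G : model) m k (g : tdata G m) (h : tdata G k) : tdata G (m + k)%N :=
  fun e i j t =>
    match split i, split j with
    | inl i', inl j' => g e i' j' t
    | inr i', inr j' => h e i' j' t
    | _, _ => None
    end.

(* F (rank m) is a subbundle of E (rank n), m <= n: transition matrices
   h of F and g of E can be chosen with g = [[h, *],[oo, *]] on every
   edge, i.e. the top-left m x m block of g is h and the bottom-left
   (n - m) x m block is oo.  Blocks are described through the values of
   the ordinal indices. *)
Definition subbundle (G : model) m n (F : tdata G m) (E : tdata G n) : Prop :=
  (m <= n)%N /\
  exists (F' : tdata G m) (E' : tdata G n),
    cohom F F' /\ cohom E E' /\
    forall e t, interior e t ->
      (forall (i j : 'I_n) (i' j' : 'I_m),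
          nat_of_ord i = nat_of_ord i' -> nat_of_ord j = nat_of_ord j' ->
          E' e i j t = F' e i' j' t) /\
      (forall i j : 'I_n, (m <= i)%N -> (j < m)%N -> E' e i j t = None).

(* Replace E and F by cohomologous transition data for which E has the
   block shape [[F, *], [oo, *]].  The finite entries of a transition matrix
   form a permutation pattern; the first m columns have their finite entries
   in the first m rows, which exhausts those rows, so the upper-right block is
   oo as well.  Hence E is cohomologous to F (+) H with H its lower-right
   block, and swapping the two blocks exhibits H as a subbundle of E. *)

From Pilot Require Import Defs.
From Stdlib Require Import Reals Lra Lia.
From HB Require Import structures.
From mathcomp Require Import all_boot fingroup perm.
From mathcomp Require Import zify.

Set Implicit Arguments.
Unset Strict Implicit.
Unset Printing Implicit Defensive.
Local Open Scope R_scope.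

Lemma tminA : associative tmin.
Proof. by move=> [a|] [b|] [c|] //=; rewrite Rmin_assoc. Qed.

Lemma tminC : commutative tmin.
Proof. by move=> [a|] [b|] //=; rewrite Rmin_comm. Qed.

Lemma tminNone : left_id None tmin.
Proof. by move=> [a|]. Qed.

HB.instance Definition _ :=
  Monoid.isComLaw.Build trop None tmin tminA tminC tminNone.

HB.instance Definition _ :=
  Monoid.isComLaw.Build Z 0%Z Z.add Z.add_assoc Z.add_comm Z.add_0_l.

Section Harmonic.

Variables (G : model) (v : vert G).

Lemma harmonic_at0 : harmonic_at v (fun=> 0%Z).
Proof. exact: big1_eq. Qed.

Lemma harmonic_atN s : harmonic_at v s -> harmonic_at v (fun e => - s e)%Z.
Proof.
by rewrite /harmonic_at -(big_morph Z.opp Z.opp_add_distr Z.opp_0) => ->.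
Qed.

Lemma harmonic_atD s1 s2 : harmonic_at v s1 -> harmonic_at v s2 ->
  harmonic_at v (fun e => s1 e + s2 e)%Z.
Proof. by rewrite /harmonic_at big_split /= => -> ->. Qed.

Lemma hvalD e c1 c2 s1 s2 t :
  hval v e (c1 + c2) (s1 + s2)%Z t = hval v e c1 s1 t + hval v e c2 s2 t.
Proof. by rewrite /hval plus_IZR; case: ifP => _; ring. Qed.

Lemma hvalN e c s t : hval v e (- c) (- s)%Z t = - hval v e c s t.
Proof. by rewrite /hval opp_IZR; case: ifP => _; ring. Qed.

Lemma hval0 e t : hval v e 0 0%Z t = 0.
Proof. by rewrite /hval; case: ifP => _; ring. Qed.

Lemma hval_affine e c s :
  exists (a : R) (sl : Z), forall t, hval v e c s t = a + IZR sl * t.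
Proof.
rewrite /hval; case: (tl e == v); first by exists c, s.
by exists (c + IZR s * len e), (- s)%Z => t; rewrite opp_IZR; ring.
Qed.

End Harmonic.

Definition tshift (a : R) (x : trop) (b : R) : trop :=
  tadd (tadd (Some a) x) (Some (- b)).

Lemma tshift0 x : tshift 0 x 0 = x.
Proof. by case: x => [r|] //; rewrite /tshift /=; congr Some; ring. Qed.

Section Cohomology.

Variables (G : model) (n : nat).
Implicit Types (g : tdata G n) (pi : vert G -> {perm 'I_n})
  (c : vert G -> 'I_n -> R) (s : vert G -> 'I_n -> edge G -> Z).

Lemma tmul_star (v2 v1 : vert G) (p2 p1 : {perm 'I_n}) (b2 b1 : 'I_n -> R)
    (r2 r1 : 'I_n -> edge G -> Z) (A : tmat n) (e : edge G) i j t :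
  tmul (tmul (star_mx v2 p2 b2 r2 e) A) (star_inv_mx v1 p1 b1 r1 e) i j t =
  tshift (hval v2 e (b2 i) (r2 i e) t) (A (p2 i) (p1 j) t)
         (hval v1 e (b1 j) (r1 j e) t).
Proof.
rewrite /tmul (big_only1 (p1 j)) //; last first.
  by move=> k /negPf pik _; rewrite /star_inv_mx eq_sym pik; case: (\big[_/_]_(_ < _) _).
rewrite (big_only1 (p2 i)) //; last first.
  by move=> k /negPf pik _; rewrite /star_mx eq_sym pik.
by rewrite /star_mx /star_inv_mx !eqxx.
Qed.

Definition star_act pi c s g : tdata G n :=
  fun e i j t =>
    tshift (hval (hd e) e (c (hd e) i) (s (hd e) i e) t)
           (g e (pi (hd e) i) (pi (tl e) j) t)
           (hval (tl e) e (c (tl e) j) (s (tl e) j e) t).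

(* Unqualified, [interior] would resolve to the topological interior of Reals. *)
Lemma cohomE g g' :
  cohom g g' <-> exists pi c s, (forall v i, harmonic_at v (s v i)) /\
    forall e i j t, Defs.interior e t -> g' e i j t = star_act pi c s g e i j t.
Proof.
by split=> -[pi [c [s [harm eq_g']]]]; exists pi, c, s; split=> // e i j t et;
  rewrite eq_g' // tmul_star.
Qed.

Lemma cohom_ext g g1 g2 : cohom g g1 ->
  (forall e i j t, Defs.interior e t -> g1 e i j t = g2 e i j t) -> cohom g g2.
Proof.
move=> [pi [c [s [harm eq_g1]]]] eq12; exists pi, c, s; split=> // e i j t et.
by rewrite -eq12 // eq_g1.
Qed.

Lemma cohom_perm g (p : {perm 'I_n}) : cohom g (fun e i j => g e (p i) (p j)).
Proof.
apply/cohomE; exists (fun=> p), (fun _ _ => 0), (fun _ _ _ => 0%Z).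
split=> [v i|e i j t _]; first exact: harmonic_at0.
by rewrite /star_act !hval0 tshift0.
Qed.

Lemma cohom_refl g : cohom g g.
Proof. by apply: cohom_ext (cohom_perm g 1%g) _ => e i j t _; rewrite !perm1. Qed.

Lemma cohom_sym g g' : cohom g g' -> cohom g' g.
Proof.
move/cohomE=> [pi [c [s [harm eq_g']]]]; apply/cohomE.
exists (fun v => (pi v)^-1%g), (fun v i => - c v ((pi v)^-1%g i)),
  (fun v i e => - s v ((pi v)^-1%g i) e)%Z.
split=> [v i|e i j t et]; first exact: harmonic_atN.
rewrite /star_act eq_g' // /star_act !permKV !hvalN.
by case: (g e i j t) => [r|] //; rewrite /tshift /=; congr Some; ring.
Qed.

Lemma cohom_trans g g1 g2 : cohom g g1 -> cohom g1 g2 -> cohom g g2.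
Proof.
move/cohomE=> [pi1 [c1 [s1 [harm1 eq_g1]]]].
move/cohomE=> [pi2 [c2 [s2 [harm2 eq_g2]]]]; apply/cohomE.
exists (fun v => (pi2 v * pi1 v)%g), (fun v i => c2 v i + c1 v (pi2 v i)),
  (fun v i e => s2 v i e + s1 v (pi2 v i) e)%Z.
split=> [v i|e i j t et]; first exact: harmonic_atD.
rewrite eq_g2 // /star_act eq_g1 // /star_act !permM !hvalD.
by case: (g e _ _ t) => [r|] //; rewrite /tshift /=; congr Some; ring.
Qed.

End Cohomology.

Lemma lower_block_closed m k (P : 'I_(m + k) -> 'I_(m + k) -> Prop) :
  (forall i j1 j2, P i j1 -> P i j2 -> j1 = j2) ->
  (forall j, exists i, P i j) ->
  (forall i j, P i j -> (j < m)%N -> (i < m)%N) ->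
  forall i j, P i j -> (i < m)%N -> (j < m)%N.
Proof.
move=> P_fun P_col P_low.
have [f Pf] : exists f : 'I_m -> 'I_m, forall j, P (lshift k (f j)) (lshift k j).
  apply: (fin_all_exists (P := fun j i => P (lshift k i) (lshift k j))) => j.
  have [i Pij] := P_col (lshift k j).
  have im : (i < m)%N := P_low _ _ Pij (ltn_ord j).
  by exists (Ordinal im); congr P: Pij; apply: val_inj.
have f_inj : injective f.
  by move=> j1 j2 f12; apply/lshift_inj/(P_fun _ _ _ (Pf j1)); rewrite f12.
move=> i j Pij im; have /codomP [j' i_fj'] := injF_onto f_inj (Ordinal im).
have -> : j = lshift k j'.
  by apply: P_fun Pij _; have -> : i = lshift k (f j') by rewrite -i_fj'; apply: val_inj.
exact: (ltn_ord j').
Qed.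

Lemma split_lshift m k (i : 'I_m) : split (lshift k i) = inl i.
Proof. exact: (unsplitK (inl i)). Qed.

Lemma split_rshift m k (i : 'I_k) : split (rshift m i) = inr i.
Proof. exact: (unsplitK (inr i)). Qed.

Lemma exists_unique_rshift m k (P : 'I_(m + k) -> Prop) (Q : 'I_k -> Prop) :
  (forall j, Q j <-> P (rshift m j)) -> (forall j, ~ P (lshift k j)) ->
  (exists! j, P j) -> exists! j, Q j.
Proof.
move=> QP notP_l [j0 [Pj0 uniq_j0]].
case: (split_ordP j0) => j0' j0E; first by move: Pj0; rewrite j0E => /notP_l.
exists j0'; split=> [|j /QP /uniq_j0]; first by apply/QP; rewrite -j0E.
by rewrite j0E => /rshift_inj.
Qed.

Section PositiveLengths.

Variable G : model.
Hypothesis len_gt0 : forall e : edge G, 0 < len e.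

Lemma entry_fin_not_inf (e : edge G) x : entry_fin e x -> ~ entry_inf e x.
Proof.
move=> [a [sl x_aff]] x_inf.
have mid : Defs.interior e (len e / 2) by have := len_gt0 e; rewrite /Defs.interior; lra.
by move: (x_aff _ mid); rewrite x_inf.
Qed.

Lemma entry_fin_tshift (e : edge G) v1 c1 s1 v2 c2 s2 x : entry_fin e x ->
  entry_fin e (fun t => tshift (hval v1 e c1 s1 t) (x t) (hval v2 e c2 s2 t)).
Proof.
move=> [a [sl x_aff]].
have [a1 [sl1 h1]] := hval_affine v1 e c1 s1.
have [a2 [sl2 h2]] := hval_affine v2 e c2 s2.
exists (a1 + a - a2), (sl1 + sl - sl2)%Z => t et.
by rewrite x_aff // h1 h2 /tshift /= minus_IZR plus_IZR; congr Some; ring.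
Qed.

Lemma bundle_cohom n (g g' : tdata G n) : cohom g g' -> bundle g -> bundle g'.
Proof.
move/cohomE=> [pi [c [s [_ eq_g']]]] bg e.
have [fin_inf [row col]] := bg e.
set p := pi (hd e); set q := pi (tl e).
have fin_g' i j : entry_fin e (g e (p i) (q j)) -> entry_fin e (g' e i j).
  move=> /(entry_fin_tshift (hd e) (c (hd e) i) (s (hd e) i e)
                            (tl e) (c (tl e) j) (s (tl e) j e)) [a [sl fin]].
  by exists a, sl => t et; rewrite eq_g' //; exact: fin.
have inf_g' i j : entry_inf e (g e (p i) (q j)) -> entry_inf e (g' e i j).
  by move=> inf t et; rewrite eq_g' // /star_act inf.
have fin_g i j : entry_fin e (g' e i j) -> entry_fin e (g e (p i) (q j)).
  move=> fin; case: (fin_inf (p i) (q j)) => // /inf_g'.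
  by move/(entry_fin_not_inf fin).
split; [|split].
- by move=> i j; case: (fin_inf (p i) (q j)) => [/fin_g'|/inf_g']; [left|right].
- move=> i; have [j0 [fin_j0 uniq_j0]] := row (p i).
  exists (q^-1%g j0); split=> [|j /fin_g /uniq_j0 ->]; last by rewrite permK.
  by apply: fin_g'; rewrite permKV.
- move=> j; have [i0 [fin_i0 uniq_i0]] := col (q j).
  exists (p^-1%g i0); split=> [|i /fin_g /uniq_i0 ->]; last by rewrite permK.
  by apply: fin_g'; rewrite permKV.
Qed.

Variables m k : nat.

Lemma trans_mx_upper_inf (e : edge G) (A : tmat (m + k)) : trans_mx e A ->
  (forall i j : 'I_(m + k), (m <= i)%N -> (j < m)%N -> entry_inf e (A i j)) ->
  forall i j : 'I_(m + k), (i < m)%N -> (m <= j)%N -> entry_inf e (A i j).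
Proof.
move=> [fin_inf [row col]] lower_inf i j im mj.
case: (fin_inf i j) => // fin_ij; exfalso; move: mj; rewrite leqNgt => /negP; apply.
apply: (lower_block_closed (P := fun i j => entry_fin e (A i j))) fin_ij im.
- move=> i' j1 j2 fin1 fin2; have [j0 [_ uniq]] := row i'.
  by rewrite -(uniq _ fin1) (uniq _ fin2).
- by move=> j'; have [i' [fin_i' _]] := col j'; exists i'.
- move=> i' j' fin' jm; rewrite ltnNge; apply/negP => mi.
  exact: entry_fin_not_inf fin' (lower_inf _ _ mi jm).
Qed.

Definition drsub (A : tdata G (m + k)) : tdata G k :=
  fun e i j => A e (rshift m i) (rshift m j).

Lemma dsum_drsub (A : tdata G (m + k)) (B : tdata G m) e t :
  (forall i j : 'I_m, A e (lshift k i) (lshift k j) t = B e i j t) ->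
  (forall i j : 'I_(m + k), (m <= i)%N -> (j < m)%N -> A e i j t = None) ->
  (forall i j : 'I_(m + k), (i < m)%N -> (m <= j)%N -> A e i j t = None) ->
  forall i j, dsum B (drsub A) e i j t = A e i j t.
Proof.
move=> upper_left lower_left upper_right i j; rewrite /dsum /drsub.
case: split_ordP => i' ->; case: split_ordP => j' ->.
- by rewrite upper_left.
- by rewrite upper_right //= leq_addr.
- by rewrite lower_left //= leq_addr.
- by [].
Qed.

Lemma bundle_dsum_r (g : tdata G m) (h : tdata G k) : bundle (dsum g h) -> bundle h.
Proof.
move=> bgh e; have [fin_inf [row col]] := bgh e.
have dsum_rr i j : dsum g h e (rshift m i) (rshift m j) = h e i j.
  by rewrite /dsum !split_rshift.
have inf_rl i j : entry_inf e (dsum g h e (rshift m i) (lshift k j)).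
  by move=> t _; rewrite /dsum split_rshift split_lshift.
have inf_lr i j : entry_inf e (dsum g h e (lshift k j) (rshift m i)).
  by move=> t _; rewrite /dsum split_rshift split_lshift.
split; [|split].
- by move=> i j; rewrite -dsum_rr; apply: fin_inf.
- move=> i; apply: (exists_unique_rshift (P := fun j => entry_fin e (dsum g h e (rshift m i) j))).
  + by move=> j; rewrite dsum_rr.
  + by move=> j fin; apply: entry_fin_not_inf fin (inf_rl i j).
  + exact: row.
- move=> j; apply: (exists_unique_rshift (P := fun i => entry_fin e (dsum g h e i (rshift m j)))).
  + by move=> i; rewrite dsum_rr.
  + by move=> i fin; apply: entry_fin_not_inf fin (inf_lr j i).
  + exact: col.
Qed.

End PositiveLengths.

Section DirectSum.

Variables (G : model) (m k : nat).

Definition lblock_fun (p : {perm 'I_m}) (i : 'I_(m + k)) : 'I_(m + k) :=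
  unsplit (match split i with inl a => inl (p a) | inr b => inr b end).

Lemma lblock_fun_inj p : injective (lblock_fun p).
Proof.
move=> i j /(can_inj unsplitK) eq_ij; rewrite -(splitK i) -(splitK j); move: eq_ij.
case: (split i) => a; case: (split j) => b //= -[]; last by move=> ->.
by move/perm_inj=> ->.
Qed.

Definition lblock_perm (p : {perm 'I_m}) : {perm 'I_(m + k)} := perm (@lblock_fun_inj p).

Lemma cohom_dsum_l (g g' : tdata G m) (h : tdata G k) :
  cohom g g' -> cohom (dsum g h) (dsum g' h).
Proof.
move/cohomE=> [pi [c [s [harm eq_g']]]]; apply/cohomE.
pose ext T (x : 'I_m -> T) (y : T) (i : 'I_(m + k)) :=
  match split i with inl a => x a | inr _ => y end.
exists (fun v => lblock_perm (pi v)), (fun v => ext _ (c v) 0),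
  (fun v => ext _ (s v) (fun=> 0%Z)).
split=> [v i|e i j t et].
  by rewrite /ext; case: (split i) => a; [apply: harm | apply: harmonic_at0].
rewrite /star_act /lblock_perm !permE /lblock_fun /dsum /ext.
by case: (split i) => a; case: (split j) => b; rewrite !unsplitK ?eq_g' // !hval0 tshift0.
Qed.

Definition swap_fun (i : 'I_(m + k)) : 'I_(m + k) :=
  match split (cast_ord (addnC m k) i) with
  | inl a => rshift m a
  | inr b => lshift k b
  end.

Lemma swap_fun_lo (i : 'I_(m + k)) (a : 'I_k) : i = a :> nat -> swap_fun i = rshift m a.
Proof.
move=> ia; rewrite /swap_fun (_ : cast_ord _ i = lshift m a) ?split_lshift //.
exact: val_inj.
Qed.

Lemma swap_fun_hi (i : 'I_(m + k)) : (k <= i)%N -> (swap_fun i < m)%N.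
Proof.
rewrite /swap_fun; case: (splitP (cast_ord (addnC m k) i)) => [a /= ia | b _] /=.
  by rewrite ia leqNgt ltn_ord.
by rewrite ltn_ord.
Qed.

Lemma swap_fun_inj : injective swap_fun.
Proof.
move=> i j; rewrite /swap_fun.
case: (splitP (cast_ord (addnC m k) i)) => a /= ia;
case: (splitP (cast_ord (addnC m k) j)) => b /= jb /(congr1 val) /= ij; apply: ord_inj;
  move: (ltn_ord a) (ltn_ord b); lia.
Qed.

Definition swap_perm : {perm 'I_(m + k)} := perm swap_fun_inj.

Lemma subbundle_dsum_r (g : tdata G m) (h : tdata G k) : subbundle h (dsum g h).
Proof.
split; first exact: leq_addl.
exists h, (fun e i j => dsum g h e (swap_perm i) (swap_perm j)).
split; first exact: cohom_refl.
split; first exact: cohom_perm.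
move=> e t _; split=> [i j i' j' ii' jj' | i j ki jk].
  by rewrite !permE (swap_fun_lo ii') (swap_fun_lo jj') /dsum !split_rshift.
rewrite !permE (@swap_fun_lo j (Ordinal jk)) // /dsum split_rshift.
by case: splitP => // b /= ib; move: (swap_fun_hi ki); rewrite ib leqNgt ltnS leq_addr.
Qed.

End DirectSum.

Lemma subbundle_cohom (G : model) m n (F : tdata G m) (E1 E2 : tdata G n) :
  cohom E1 E2 -> subbundle F E2 -> subbundle F E1.
Proof.
move=> c12 [mn [F' [E' [cF [cE blocks]]]]]; split=> //.
by exists F', E'; split; [|split; [exact: cohom_trans c12 cE|]].
Qed.

Theorem proposition2p5 (G : model) (HG : simple_model G) (m k : nat)
    (E : tdata G (m + k)) (F : tdata G m) :
  bundle E -> bundle F -> subbundle F E ->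
  exists H : tdata G k, bundle H /\ subbundle H E /\ cohom E (dsum F H).
Proof.
move=> bE _ [_ [F' [E' [cF [cE blocks]]]]].
have len_gt0 := proj2 (proj2 HG).
have lower_inf e (i j : 'I_(m + k)) : (m <= i)%N -> (j < m)%N -> entry_inf e (E' e i j).
  by move=> mi jm t et; apply: (proj2 (blocks e t et)).
have upper_inf e := trans_mx_upper_inf len_gt0 (bundle_cohom len_gt0 cE bE e) (lower_inf e).
have cE_dsum : cohom E (dsum F' (drsub E')).
  apply: cohom_ext cE _ => e i j t et; symmetry.
  apply: dsum_drsub => [i' j'|i' j' mi jm|i' j' im mj].
  - exact: (proj1 (blocks e t et)).
  - exact: lower_inf.
  - exact: upper_inf.
exists (drsub E'); split; [|split].
- exact (bundle_dsum_r len_gt0 (bundle_cohom len_gt0 cE_dsum bE)).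
- exact (subbundle_cohom cE_dsum (subbundle_dsum_r F' (drsub E'))).
- exact (cohom_trans cE_dsum (cohom_sym (cohom_dsum_l (drsub E') cF))).
Qed.
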